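(* Let $p,r\in\mathbb{C}$ with $p$ not a root of unity. For all integers $m,n\ge 0$, $$H_{m,n}(x,y;p,r)=\sum_{k=0}^{\min(m,n)}\frac{(-1)^k p^{\binom{k}{2}}(p;p)_m(p;p)_n\,r^k}{(p;p)_{m-k}(p;p)_{n-k}(p;p)_k}\,H_{m-k}(x;p)\,H_{n-k}(y;p).$$ In particular $H_{m,n}(x,y;p,r)=H_{n,m}(y,x;p,r)$ for all $m,n\ge 0$.
   Context: For $a,p\in\mathbb{C}$ let $(a;p)_0=1$ and $(a;p)_k=\prod_{l=0}^{k-1}(1-ap^l)$. The continuous $p$-Hermite polynomials $H_n(x;p)\in\mathbb{C}[x]$ are defined by $H_{-1}(x;p)=0$, $H_0(x;p)=1$ and $H_{n+1}(x;p)=2xH_n(x;p)-(1-p^n)H_{n-1}(x;p)$ for $n\ge0$. The bivariate continuous $p$-Hermite polynomials $H_{m,n}(x,y;p,r)\in\mathbb{C}[x,y]$, $m,n\ge 0$, are defined by setting $H_{-1,n}=H_{m,-1}=0$, $H_{0,n}(x,y;p,r)=H_n(y;p)$, and, for all $m,n\ge0$, $$H_{m+1,n}(x,y;p,r)=2xH_{m,n}(x,y;p,r)-(1-p^m)H_{m-1,n}(x,y;p,r)-p^m(1-p^n)\,r\,H_{m,n-1}(x,y;p,r).$$ *)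

From HB Require Import structures.
From mathcomp Require Import all_boot all_order all_algebra.
From mathcomp Require Import complex.
From mathcomp Require Import reals.
Set Implicit Arguments. Unset Strict Implicit. Unset Printing Implicit Defensive.
Import Order.TTheory GRing.Theory Num.Theory.
Local Open Scope ring_scope.

Section Defs.
Variable F : comRingType.

Definition qpoch (a p : F) (k : nat) : F := \prod_(l < k) (1 - a * p ^+ l).

(* (H_{n-1}, H_n) for the continuous p-Hermite polynomials *)
Fixpoint hermite_pair (p : F) (n : nat) : {poly F} * {poly F} :=
  match n with
  | 0 => (0, 1)
  | n'.+1 => let (a, b) := hermite_pair p n' in
             (b, 2%:R *: ('X * b) - (1 - p ^+ n') *: a)
  end.

Definition hermite (p : F) (n : nat) : {poly F} := (hermite_pair p n).2.

(* Bivariate polynomials in x, y are elements of {poly {poly F}}, with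
   x := 'X (outer variable) and y := 'Y = 'X%:P (inner variable), following
   polyXY.  H_n(x;p) is (hermite p n)^:P and H_n(y;p) is (hermite p n)%:P. *)

(* (H_{m-1, .}, H_{m, .}) as functions of n *)
Fixpoint biherm_pair (p r : F) (m : nat)
  : (nat -> {poly {poly F}}) * (nat -> {poly {poly F}}) :=
  match m with
  | 0 => (fun _ => 0, fun n => (hermite p n)%:P)
  | m'.+1 => let (a, b) := biherm_pair p r m' in
     (b, fun n => 2%:R%:P%:P * ('X * b n) - (1 - p ^+ m')%:P%:P * a n
                  - (p ^+ m' * (1 - p ^+ n) * r)%:P%:P *
                    (match n with 0 => 0 | n'.+1 => b n' end))
  end.

Definition biherm (p r : F) (m n : nat) : {poly {poly F}} :=
  (biherm_pair p r m).2 n.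

End Defs.

From HB Require Import structures.
From mathcomp Require Import all_boot all_order all_algebra.
From mathcomp Require Import complex.
From mathcomp Require Import reals.
From mathcomp Require Import ring zify.
Import Order.TTheory GRing.Theory Num.Theory.
Local Open Scope ring_scope.
Set Implicit Arguments. Unset Strict Implicit. Unset Printing Implicit Defensive.

(* Both sides satisfy the three-term recurrence in m that defines H_{m,n}, and
   agree at m = 0.  Writing (p;p)_m/(p;p)_{m-k} as the falling product
   prod_{l<k} (1 - p^{m-l}), which vanishes for k > m, the sum can be taken
   over any range k < N with N > min(m,n); for a fixed N the recurrence is
   checked termwise: the Hermite recurrence absorbs the factor 2x, and what is
   left is the coefficient identity
     c_{m+1,n,k+1} - c_{m,n,k+1} = - p^m (1 - p^n) r c_{m,n-1,k}.
   Symmetry then follows from c_{m,n,k} = c_{n,m,k}. *)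

Section Recurrences.
Variables (F : comNzRingType) (p r : F).

Lemma hermite_mulX j :
  2%:R%:P * ('X * hermite p j) = hermite p j.+1 + (1 - p ^+ j)%:P * hermite p j.-1.
Proof.
rewrite /hermite !mul_polyC; case: j => [|j] /=.
  by rewrite expr0 subrr !scale0r subr0 addr0.
by case: (hermite_pair p j) => a b /=; rewrite subrK.
Qed.

Lemma hermite_mulX_outer j :
  2%:R%:P%:P * ('X * (hermite p j)^:P) =
  (hermite p j.+1)^:P + (1 - p ^+ j)%:P%:P * (hermite p j.-1)^:P.
Proof.
rewrite -(map_polyC polyC 2%:R) -(map_polyC polyC (1 - p ^+ j)).
by rewrite -[in 'X * _](map_polyX polyC) -!rmorphM -rmorphD hermite_mulX.
Qed.

Lemma biherm_pair_fst m : (biherm_pair p r m.+1).1 = biherm p r m.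
Proof. by rewrite /biherm /=; case: biherm_pair. Qed.

(* At m = 0 (resp. n = 0) the junk value m.-1 = 0 (resp. n.-1 = 0) is
   harmless: its coefficient contains the factor 1 - p^0 = 0. *)
Lemma bihermS m n :
  biherm p r m.+1 n =
  2%:R%:P%:P * ('X * biherm p r m n) - (1 - p ^+ m)%:P%:P * biherm p r m.-1 n
  - (p ^+ m * (1 - p ^+ n) * r)%:P%:P * biherm p r m n.-1.
Proof.
have prevE : (1 - p ^+ m)%:P%:P * (biherm_pair p r m).1 n =
             (1 - p ^+ m)%:P%:P * biherm p r m.-1 n.
  by case: m => [|m]; rewrite ?biherm_pair_fst // expr0 subrr !polyC0 !mul0r.
rewrite [LHS]/biherm /= -{}prevE /biherm; case: biherm_pair => a b /=.
by case: n => [|n] //=; rewrite expr0 subrr !(mulr0, mul0r, polyC0).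
Qed.

End Recurrences.

Section QFalling.
Variables (F : comNzRingType) (p : F).

(* (p;p)_m / (p;p)_(m-k) for k <= m; for k > m the factor l = m is 1 - p^0 = 0. *)
Definition qfall (m k : nat) : F := \prod_(l < k) (1 - p ^+ (m - l)).

Lemma qfallS m k : qfall m k.+1 = qfall m k * (1 - p ^+ (m - k)).
Proof. by rewrite /qfall big_ord_recr. Qed.

Lemma qfallS_pred m k : qfall m k.+1 = (1 - p ^+ m) * qfall m.-1 k.
Proof.
rewrite /qfall big_ord_recl subn0; congr (_ * _); apply: eq_bigr => i _.
by rewrite lift0; congr (1 - p ^+ _); lia.
Qed.

Lemma qfall_eq0 m k : (m < k)%N -> qfall m k = 0.
Proof.
by move=> lt_mk; rewrite /qfall (bigD1 (Ordinal lt_mk)) //= subnn expr0 subrr mul0r.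
Qed.

Lemma subr_qfallS m k :
  qfall m.+1 k.+1 - qfall m k.+1 = p ^+ (m - k) * (1 - p ^+ k.+1) * qfall m k.
Proof.
have [le_km | lt_mk] := leqP k m; last first.
  by rewrite !qfall_eq0 ?subrr ?mulr0 //; lia.
rewrite qfallS_pred qfallS.
have -> : p ^+ m.+1 = p ^+ k.+1 * p ^+ (m - k) by rewrite -exprD; congr (p ^+ _); lia.
ring.
Qed.

Lemma qpochS j : qpoch p p j.+1 = qpoch p p j * (1 - p ^+ j.+1).
Proof. by rewrite /qpoch big_ord_recr /= exprS. Qed.

Lemma qpoch_qfall k m : (k <= m)%N -> qpoch p p m = qpoch p p (m - k) * qfall m k.
Proof.
elim: k => [|k IHk] lt_km; first by rewrite subn0 /qfall big_ord0 mulr1.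
rewrite IHk 1?ltnW // qfallS mulrA [RHS]mulrAC; congr (_ * _).
have -> : (m - k = (m - k.+1).+1)%N by lia.
exact: qpochS.
Qed.

End QFalling.

Section Coefficients.
Variables (F : fieldType) (p r : F).
Hypothesis p_not_root1 : forall k, p ^+ k.+1 != 1.

Lemma qpoch_neq0 k : qpoch p p k != 0.
Proof.
by apply/prodf_neq0 => l _; rewrite -exprS subr_eq0 eq_sym p_not_root1.
Qed.

Definition bicoef (m n k : nat) : F :=
  (-1) ^+ k * p ^+ 'C(k, 2) * r ^+ k / qpoch p p k * qfall p m k * qfall p n k.

Lemma bicoef0 m n : bicoef m n 0 = 1.
Proof. by rewrite /bicoef /qfall /qpoch !big_ord0 bin0n !expr0 invr1 !mulr1. Qed.

Lemma bicoef_eq0 m n k : (minn m n < k)%N -> bicoef m n k = 0.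
Proof.
by rewrite /bicoef gtn_min => /orP[] /qfall_eq0 ->; rewrite ?mulr0 ?mul0r.
Qed.

Lemma bicoefC m n k : bicoef m n k = bicoef n m k.
Proof. by rewrite /bicoef mulrAC. Qed.

Lemma bicoef_predl m n k :
  bicoef m n k * (1 - p ^+ (m - k)) = (1 - p ^+ m) * bicoef m.-1 n k.
Proof.
rewrite /bicoef; set c := _ / qpoch p p k.
by rewrite mulrAC -[c * _ * _]mulrA -qfallS qfallS_pred; ring.
Qed.

Lemma subr_bicoefS m n k :
  bicoef m.+1 n k.+1 - bicoef m n k.+1 = - (p ^+ m * (1 - p ^+ n) * r * bicoef m n.-1 k).
Proof.
have [le_km | lt_mk] := leqP k m; last by rewrite !bicoef_eq0 ?subrr ?mulr0 ?oppr0 //; lia.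
have -> : p ^+ m = p ^+ k * p ^+ (m - k) by rewrite -exprD subnKC.
have Qk_neq0 := qpoch_neq0 k; have pk_neq1 := p_not_root1 k.
rewrite /bicoef; set c := _ / qpoch p p k.+1.
rewrite -mulrBl -mulrBr subr_qfallS [qfall p n _]qfallS_pred /c qpochS binS bin1.
rewrite !exprD !exprS; field.
by rewrite Qk_neq0 -exprS subr_eq0 eq_sym pk_neq1.
Qed.

Lemma bicoefE m n k : (k <= m)%N -> (k <= n)%N ->
  bicoef m n k = ((-1) ^+ k * p ^+ 'C(k, 2) * qpoch p p m * qpoch p p n * r ^+ k)
                   / (qpoch p p (m - k) * qpoch p p (n - k) * qpoch p p k).
Proof.
move=> le_km le_kn; rewrite (qpoch_qfall p le_km) (qpoch_qfall p le_kn) /bicoef.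
have := qpoch_neq0 (m - k); have := qpoch_neq0 (n - k); have := qpoch_neq0 k.
by move=> ? ? ?; field; apply/and3P.
Qed.

End Coefficients.

Section Expansion.
Variables (F : fieldType) (p r : F).
Hypothesis p_not_root1 : forall k, p ^+ k.+1 != 1.

Definition biterm (m n k : nat) : {poly {poly F}} :=
  (bicoef p r m n k)%:P%:P * (hermite p (m - k))^:P * (hermite p (n - k))%:P.

(* Any cut-off N > minn m n gives the full sum (see [bisum_min]); keeping N
   fixed lets the recurrence in m be compared term by term. *)
Definition bisum (N m n : nat) : {poly {poly F}} := \sum_(k < N) biterm m n k.

Lemma biterm_eq0 m n k : (minn m n < k)%N -> biterm m n k = 0.
Proof. by rewrite /biterm => /bicoef_eq0 ->; rewrite !raddf0 !mul0r. Qed.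

Lemma bisum_min N m n : (minn m n < N)%N -> bisum N m n = bisum (minn m n).+1 m n.
Proof.
move=> lt_mn_N; rewrite /bisum (big_ord_widen N (biterm m n) lt_mn_N) [RHS]big_mkcond.
apply: eq_bigr => k _; case: ifP => // /negbT; rewrite -leqNgt => le_k.
by rewrite biterm_eq0.
Qed.

Lemma bisum_recr N m n : (minn m n < N)%N -> bisum N.+1 m n = bisum N m n.
Proof. by move=> lt_mn_N; rewrite /bisum big_ord_recr /= biterm_eq0 ?addr0. Qed.

Lemma bisum_mulX N m n :
  2%:R%:P%:P * ('X * bisum N m n) =
  \sum_(k < N) (bicoef p r m n k)%:P%:P * (hermite p (m.+1 - k))^:P * (hermite p (n - k))%:P
  + (1 - p ^+ m)%:P%:P * bisum N m.-1 n.
Proof.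
rewrite /bisum !mulr_sumr -big_split; apply: eq_bigr => k _ /=.
have [le_km | lt_mk] := leqP k m; last first.
  by rewrite /biterm !bicoef_eq0 ?gtn_min ?lt_mk //; [rewrite !raddf0 !(mul0r, mulr0, addr0) | lia].
rewrite /biterm subSn //.
transitivity ((bicoef p r m n k)%:P%:P * (2%:R%:P%:P * ('X * (hermite p (m - k))^:P))
              * (hermite p (n - k))%:P); first by ring.
rewrite hermite_mulX_outer (_ : (m - k).-1 = m.-1 - k)%N; last by lia.
rewrite !mulrA -[(1 - p ^+ m)%:P%:P * _]rmorphM -rmorphM /= -bicoef_predl.
by rewrite !rmorphM /=; ring.
Qed.

Lemma bisum_shift N m n : (m.+1 < N)%N ->
  \sum_(k < N) (bicoef p r m.+1 n k - bicoef p r m n k)%:P%:P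
                 * (hermite p (m.+1 - k))^:P * (hermite p (n - k))%:P
  = - ((p ^+ m * (1 - p ^+ n) * r)%:P%:P * bisum N m n.-1).
Proof.
case: N => [//|N] lt_mN.
rewrite big_ord_recl !bicoef0 subrr !raddf0 !mul0r add0r.
rewrite bisum_recr; last by rewrite (leq_ltn_trans (geq_minl _ _)).
rewrite /bisum mulr_sumr -sumrN; apply: eq_bigr => k _.
rewrite lift0 subr_bicoefS // /biterm subSS (_ : n - k.+1 = n.-1 - k)%N; last by lia.
by rewrite !rmorphN !rmorphM /=; ring.
Qed.

Lemma bisumS N m n : (m.+1 < N)%N ->
  bisum N m.+1 n =
  2%:R%:P%:P * ('X * bisum N m n) - (1 - p ^+ m)%:P%:P * bisum N m.-1 n
  - (p ^+ m * (1 - p ^+ n) * r)%:P%:P * bisum N m n.-1.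
Proof.
move=> lt_mN; rewrite bisum_mulX addrK -(bisum_shift n lt_mN) /bisum -big_split.
by apply: eq_bigr => k _; rewrite /biterm !rmorphB /=; ring.
Qed.

Lemma biherm_bisum N m n : (m < N)%N -> biherm p r m n = bisum N m n.
Proof.
elim/ltn_ind: m n => -[_ n lt_0N | m IHm n lt_mN].
  rewrite bisum_min ?min0n // /bisum big_ord1 /biterm bicoef0 !subn0 /biherm /=.
  by rewrite !rmorph1 !mul1r.
by rewrite bihermS bisumS // !IHm //; lia.
Qed.

End Expansion.

Theorem mainTheorem1 (R : realType) (p r : R[i])
  (hp : forall N : nat, (0 < N)%N -> p ^+ N != 1) :
  (forall m n : nat,
    biherm p r m n =
    \sum_(0 <= k < (minn m n).+1)
      (((-1) ^+ k * p ^+ 'C(k, 2) * qpoch p p m * qpoch p p n * r ^+ k)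
        / (qpoch p p (m - k) * qpoch p p (n - k) * qpoch p p k))%:P%:P
      * (hermite p (m - k))^:P * (hermite p (n - k))%:P)
  /\ (forall m n : nat, biherm p r m n = swapXY (biherm p r n m)).
Proof.
have p_not_root1 k : p ^+ k.+1 != 1 by exact: hp.
split=> m n.
  rewrite (biherm_bisum r p_not_root1 (N := m.+1)) // bisum_min ?ltnS ?geq_minl //.
  rewrite big_mkord; apply: eq_bigr => k _.
  have := ltn_ord k; rewrite ltnS leq_min => /andP[le_km le_kn].
  by rewrite /biterm (bicoefE r p_not_root1 le_km le_kn).
rewrite !(biherm_bisum r p_not_root1 (N := (m + n).+1)) ?ltnS ?leq_addl ?leq_addr //.
rewrite /bisum rmorph_sum; apply: eq_bigr => k _.
by rewrite /biterm bicoefC !rmorphM /= !swapXY_polyC !map_polyC !swapXY_map_polyC mulrAC.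
Qed.
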